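(* Let $G$ be a torsion-free group, $\mathbb{F}$ a field, $\mathsf{a}$ a unit in $\mathbb{F}[G]$ with $|supp(\mathsf{a})|=4$ and $|S_{\mathsf{a}}|=12$, and let $\mathsf{b}\in\mathbb{F}[G]$ with $\mathsf{a}\mathsf{b}=1$. Then $U(\mathsf{a},\mathsf{b})$ is the induced subgraph on the vertex set $supp(\mathsf{b})$ of the Cayley graph of $G$ with respect to $S_{\mathsf{a}}$.
   Context: $supp(\gamma)=\{x\in G:\gamma_x\ne0\}$; $S_{\mathsf{a}}=\{h^{-1}h':h\ne h',\ h,h'\in supp(\mathsf{a})\}$. The unit graph $U(\mathsf{a},\mathsf{b})$ is the multigraph with vertex set $supp(\mathsf{b})$ whose edges are the sets $\{(h,h',g,g'),(h',h,g',g)\}$ with $h,h'\in supp(\mathsf{a})$, $g,g'\in supp(\mathsf{b})$, $g\ne g'$, $hg=h'g'$, each joining $g$ and $g'$. The Cayley graph of $G$ with respect to an inverse-closed $S\not\ni 1$ is the simple graph on $G$ in which $x,y$ are adjacent iff $xy^{-1}\in S$. *)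

From HB Require Import structures.
From mathcomp Require Import all_boot all_algebra.
From mathcomp Require Import finmap.
From mathcomp Require Import classical_sets.
Set Implicit Arguments. Unset Strict Implicit. Unset Printing Implicit Defensive.
Import GRing.Theory.
Local Open Scope fset_scope.

Definition torsion_free (G : groupType) : Prop :=
  forall (x : G) (n : nat), (0 < n)%N -> (x ^+ n)%g = 1%g -> x = 1%g.

Notation group_alg G F := {fsfun G -> F with (0 : F)%R}.

Definition supp (G : groupType) (F : fieldType) (g : group_alg G F) : {fset G} :=
  finsupp g.

Definition ga_mul (G : groupType) (F : fieldType) (a b : group_alg G F) : G -> F :=
  fun x => (\sum_(h <- supp a) a h * b ((h^-1) * x)%g)%R.

Definition ga_one (G : groupType) (F : fieldType) : G -> F :=
  fun x => ((x == 1%g)%:R)%R.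

Definition ga_unit (G : groupType) (F : fieldType) (a : group_alg G F) : Prop :=
  exists c : group_alg G F, ga_mul a c =1 @ga_one G F /\ ga_mul c a =1 @ga_one G F.

Definition S_set (G : groupType) (F : fieldType) (a : group_alg G F) : {fset G} :=
  [fset ((p.1)^-1 * p.2)%g | p in (supp a `*` supp a) & p.1 != p.2].

Definition cayley_adj (G : groupType) (S : {fset G}) (x y : G) : bool :=
  (x * y^-1)%g \in S.

(** Unit graph U(a,b): multigraph on supp b.  Its edges are the sets
    {(h,h',g,g'), (h',h,g',g)} with h,h' in supp a, g,g' in supp b, g <> g',
    hg = h'g'; such an edge joins g and g'. *)
Definition uedge (G : groupType) (h h' g g' : G) : set (G * G * G * G) :=
  [set (h, h', g, g'); (h', h, g', g)].

Definition U_edge (G : groupType) (F : fieldType) (a b : group_alg G F)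
    (E : set (G * G * G * G)) : Prop :=
  exists h h' g g' : G,
    [/\ h \in supp a, h' \in supp a, g \in supp b & g' \in supp b] /\
    [/\ g != g', (h * g = h' * g')%g & E = uedge h h' g g'].

Definition U_joins (G : groupType) (E : set (G * G * G * G)) (x y : G) : Prop :=
  exists h h' : G, E = uedge h h' x y.

(** The multigraph U(a,b) (vertex set supp b) is the induced subgraph on
    supp b of the Cayley graph Cay(G, S): two vertices are joined by an edge
    of U iff they are adjacent in the Cayley graph, and no two distinct edges
    of U join the same pair of vertices. *)
Definition U_is_induced_cayley (G : groupType) (F : fieldType)
    (a b : group_alg G F) (S : {fset G}) : Prop :=
  (forall x y : G, x \in supp b -> y \in supp b ->
     (cayley_adj S x y <-> exists E, U_edge a b E /\ U_joins E x y)) /\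
  (forall (E E' : set (G * G * G * G)) (x y : G),
     U_edge a b E -> U_edge a b E' -> U_joins E x y -> U_joins E' x y -> E = E').

From HB Require Import structures.
From mathcomp Require Import all_boot all_algebra.
From mathcomp Require Import finmap.
From mathcomp Require Import classical_sets.
Local Open Scope fset_scope.

(* Since h g = h' g' is equivalent to g g'^-1 = h^-1 h', the edges of U(a, b)
   joining g and g' correspond to the ordered pairs (h, h') of distinct elements
   of supp a with h^-1 h' = g g'^-1; in particular g, g' are joined iff they are
   adjacent in Cay(G, S_a).  When |supp a| = 4, the 4 * 3 = 12 such pairs all
   have distinct quotients h^-1 h' exactly when |S_a| = 12, so such a pair is
   determined by g g'^-1 and no two edges join the same vertices. *)

Section OffDiagonal.

Lemma size_enum_fset (K : choiceType) (A : {fset K}) :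
  size (enum_finmem (mem A)) = #|` A|.
Proof.
apply: perm_size; apply: uniq_perm; [exact: enum_finmem_uniq | exact: fset_uniq |].
by move=> x; rewrite enum_finmemE.
Qed.

Lemma cardfsM (K K' : choiceType) (A : {fset K}) (B : {fset K'}) :
  #|` A `*` B| = (#|` A| * #|` B|)%N.
Proof.
rewrite /fsetM (perm_size (enum_imfset2 _ _)); last first.
  by move=> [x1 y1] [x2 y2] _ _ /= [-> ->].
rewrite size_allpairs_dep size_enum_fset -(@size_enum_fset _ A).
by elim: (enum_finmem _) => [|x s IHs] //=; rewrite IHs mulSn.
Qed.

Context {K : choiceType}.

Definition offdiag (A : {fset K}) : {fset K * K} :=
  [fset p in A `*` A | p.1 != p.2].

Lemma offdiagE (A : {fset K}) :
  offdiag A = A `*` A `\` [fset (x, x) | x in A].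
Proof.
apply/fsetP=> -[x y]; rewrite !inE /=.
apply/andP/andP=> [[xyA xy] | [xyD xyA]]; split=> //.
  by apply: contra xy => /imfsetP[z _ [-> ->]].
by apply: contraNneq xyD => ->; apply/imfsetP; exists y; case/andP: xyA.
Qed.

Lemma card_offdiag (A : {fset K}) :
  #|` offdiag A| = (#|` A| * #|` A|.-1)%N.
Proof.
rewrite offdiagE cardfsDS; last first.
  by apply/fsubsetP=> _ /imfsetP[x /= xA ->]; rewrite !inE /= xA.
rewrite cardfsM card_in_imfset ?size_enum_fset; last by move=> x y _ _ [].
by rewrite -subn1 mulnBr muln1.
Qed.

End OffDiagonal.

Section UnitGraph.

Context {G : groupType} {F : fieldType}.
Local Open Scope group_scope.

Lemma mulg_eq_divg (h h' x y : G) : (h * x == h' * y) = (x / y == h^-1 * h').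
Proof. by rewrite divg_eq -mulgA -[x == _](inj_eq (mulgI h)) mulVKg. Qed.

Lemma mulg_eq_eq {h h' x y : G} : h * x = h' * y -> (h == h') = (x == y).
Proof.
move=> hxy; apply/eqP/eqP=> [hh' | xy].
  by apply: (mulgI h); rewrite hxy hh'.
by apply: (mulIg x); rewrite hxy xy.
Qed.

Lemma S_setE (a : group_alg G F) :
  S_set a = [fset p.1^-1 * p.2 | p in offdiag (supp a)].
Proof.
apply/fsetP=> z; apply/imfsetP/imfsetP=> -[p pP ->];
  by exists p; rewrite // !inE in pP *.
Qed.

Lemma S_set_inj (a : group_alg G F) :
  #|` S_set a| = (#|` supp a| * #|` supp a|.-1)%N ->
  {in offdiag (supp a) &, injective (fun p : G * G => p.1^-1 * p.2)}.
Proof.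
by move=> cardS; apply/card_in_imfsetP; rewrite -S_setE cardS card_offdiag.
Qed.

Lemma U_edge_joinsP {a b : group_alg G F} {E} {x y : G} :
  U_edge a b E -> U_joins E x y ->
  exists h h', [/\ (h, h') \in offdiag (supp a), h * x = h' * y
                 & E = uedge h h' x y].
Proof.
move=> [h1 [h1' [g [g' [[ah1 ah1' _ _] [gg' hg EE]]]]]] [h [h' Ej]].
exists h, h'; suff [] : (h, h') \in offdiag (supp a) /\ h * x = h' * y by [].
have hh1 : h1 != h1' by rewrite (mulg_eq_eq hg).
have : uedge h1 h1' g g' (h, h', x, y) by rewrite -EE Ej; left.
by case=> -[-> -> -> ->]; rewrite !inE /= ah1 ah1' ?(eq_sym h1') hh1.
Qed.

End UnitGraph.

Theorem mainTheorem11 (G : groupType) (F : fieldType) (a b : group_alg G F) :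
  torsion_free G ->
  ga_unit a ->
  #|` supp a| = 4%N ->
  #|` S_set a| = 12%N ->
  ga_mul a b =1 @ga_one G F ->
  U_is_induced_cayley a b (S_set a).
Proof.
move=> _ _ card_a card_S _.
have quot_inj : {in offdiag (supp a) &, injective (fun p : G * G => p.1^-1 * p.2)%g}.
  by apply: S_set_inj; rewrite card_S card_a.
split=> [x y bx b_y | E E' x y UE UE' jE jE'].
  rewrite /cayley_adj S_setE; split=> [/imfsetP[[h h'] hh'] | [E [UE jE]]].
    move: (hh'); rewrite !inE /= => /andP[/andP[ah ah'] neq_hh'] /eqP.
    rewrite -mulg_eq_divg => /eqP hxy.
    exists (uedge h h' x y); split; last by exists h, h'.
    by exists h, h', x, y; rewrite -(mulg_eq_eq hxy).
  have [h [h' [hh' hxy _]]] := U_edge_joinsP UE jE.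
  by apply/imfsetP; exists (h, h') => //; apply/eqP; rewrite -mulg_eq_divg hxy.
have [h1 [h1' [hh1 hxy1 ->]]] := U_edge_joinsP UE jE.
have [h2 [h2' [hh2 hxy2 ->]]] := U_edge_joinsP UE' jE'.
have /eqP hq1 : (x * y^-1 == h1^-1 * h1')%g by rewrite -mulg_eq_divg hxy1.
have /eqP hq2 : (x * y^-1 == h2^-1 * h2')%g by rewrite -mulg_eq_divg hxy2.
by case: (quot_inj (h1, h1') (h2, h2') hh1 hh2 (etrans (esym hq1) hq2)) => -> ->.
Qed.
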